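(* Let $P\subset\mathbb{R}^4$ be the set of $(e_1,\dots,e_4)$ with $e_1\le e_2\le e_3\le e_4$ and $e_{i+j}\le e_i+e_j$ for all $i,j\ge1$ with $i+j\le4$. Let $Q\subset\mathbb{R}^4\times\mathbb{R}^5$ be the set of $(e_1,\dots,e_4,f_1,\dots,f_5)$ such that $e_1\le\dots\le e_4$, $f_1\le\dots\le f_5$, $2\sum_{k=1}^4e_k=\sum_{i=1}^5f_i$, and, writing $N=\sum_k e_k$ and $d^{(k)}_{ij}=f_i+f_j+e_k-N$: (i) $d^{(k)}_{ij}\ge0$ for all $1\le i<j\le5$, $1\le k\le4$ with $i+j+k=8$; (ii) if $d^{(1)}_{15}<0$, $d^{(1)}_{24}<0$ and $d^{(4)}_{12}<0$ then $d^{(1)}_{25}=0$. Let $\mathrm{pr}\colon\mathbb{R}^4\times\mathbb{R}^5\to\mathbb{R}^4$ be the projection to the first four coordinates. Then $\mathrm{pr}(Q\cap\mathbb{Z}^9)=P\cap\mathbb{Z}^4$. *)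

(* Points of R^4 / R^5 are functions 'I_4 -> R, 'I_5 -> R;
   coordinates are accessed 1-based via [cd]. *)
From mathcomp Require Import all_boot all_order all_algebra.
Set Implicit Arguments. Unset Strict Implicit. Unset Printing Implicit Defensive.
Import Order.TTheory GRing.Theory Num.Theory.
Local Open Scope ring_scope.

Definition cd {R : Type} {n : nat} (x : 'I_n.+1 -> R) (k : nat) : R :=
  x (inord k.-1).

Definition inP {R : realDomainType} (e : 'I_4 -> R) : Prop :=
  (forall k : nat, (1 <= k < 4)%N -> cd e k <= cd e k.+1) /\
  (forall i j : nat, (1 <= i)%N -> (1 <= j)%N -> (i + j <= 4)%N ->
      cd e (i + j) <= cd e i + cd e j).

Definition Nsum {R : realDomainType} (e : 'I_4 -> R) : R := \sum_(k < 4) e k.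

Definition dd {R : realDomainType} (e : 'I_4 -> R) (f : 'I_5 -> R)
  (k i j : nat) : R := cd f i + cd f j + cd e k - Nsum e.

Definition inQ {R : realDomainType} (e : 'I_4 -> R) (f : 'I_5 -> R) : Prop :=
  (forall k : nat, (1 <= k < 4)%N -> cd e k <= cd e k.+1) /\
  (forall k : nat, (1 <= k < 5)%N -> cd f k <= cd f k.+1) /\
  2 * Nsum e = \sum_(i < 5) f i /\
  (forall i j k : nat, (1 <= i)%N -> (i < j)%N -> (j <= 5)%N ->
      (1 <= k <= 4)%N -> (i + j + k = 8)%N -> 0 <= dd e f k i j) /\
  (dd e f 1 1 5 < 0 -> dd e f 1 2 4 < 0 -> dd e f 4 1 2 < 0 ->
      dd e f 1 2 5 = 0).

From mathcomp Require Import all_boot all_order all_algebra lra.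
Import Order.TTheory GRing.Theory Num.Theory.
Local Open Scope ring_scope.

(* Both P and the fibres of Q are cut out by finitely many linear
   inequalities in the coordinates, so the theorem holds over any real
   domain.  Every defining inequality of P is a nonnegative combination of
   those of Q, hence pr(Q) lies in P.  Conversely P is covered by four
   regions, on each of which an explicit point of the fibre is given by
   linear forms in e with integer coefficients; integer points of P thus
   lift to integer points of Q. *)

Section Projection.
Variable R : realDomainType.
Implicit Types (e : 'I_4 -> R) (f : 'I_5 -> R).

Lemma Nsum_cd e : Nsum e = cd e 1 + cd e 2 + cd e 3 + cd e 4.
Proof.
rewrite /Nsum /cd !big_ord_recr big_ord0 /= add0r.
by congr (_ + _ + _ + _); congr e; apply/val_inj; rewrite /= inordK.
Qed.

Lemma sum_cd5 f : \sum_(i < 5) f i = cd f 1 + cd f 2 + cd f 3 + cd f 4 + cd f 5.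
Proof.
rewrite /cd !big_ord_recr big_ord0 /= add0r.
by congr (_ + _ + _ + _ + _); congr f; apply/val_inj; rewrite /= inordK.
Qed.

Lemma cd_nth n (s : seq R) k :
  (0 < k <= n.+1)%N -> cd (fun i : 'I_n.+1 => s`_i) k = s`_k.-1.
Proof. by case: k => // k /andP[_ k_le]; rewrite /cd inordK. Qed.

Lemma inPE e : inP e <->
  [/\ [/\ cd e 1 <= cd e 2, cd e 2 <= cd e 3 & cd e 3 <= cd e 4],
      cd e 2 <= cd e 1 + cd e 1, cd e 3 <= cd e 1 + cd e 2,
      cd e 4 <= cd e 1 + cd e 3 & cd e 4 <= cd e 2 + cd e 2].
Proof.
split=> [[mon sub]|[[? ? ?] ? ? ? ?]].
  by split; [split; apply: mon | exact: (sub 1 1) | exact: (sub 1 2)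
          | exact: (sub 1 3) | exact: (sub 2 2)].
split=> [[|[|[|[|k]]]] // *| [|[|[|[|i]]]] [|[|[|[|j]]]] //=];
  rewrite ?(addSn, addnS) //= => *; lra.
Qed.

Lemma inQE e f : inQ e f <->
  [/\ [/\ cd e 1 <= cd e 2, cd e 2 <= cd e 3 & cd e 3 <= cd e 4],
      [/\ cd f 1 <= cd f 2, cd f 2 <= cd f 3, cd f 3 <= cd f 4
        & cd f 4 <= cd f 5],
      2 * Nsum e = cd f 1 + cd f 2 + cd f 3 + cd f 4 + cd f 5,
      [/\ 0 <= dd e f 1 2 5, 0 <= dd e f 1 3 4, 0 <= dd e f 2 1 5,
          0 <= dd e f 2 2 4
        & [/\ 0 <= dd e f 3 1 4, 0 <= dd e f 3 2 3 & 0 <= dd e f 4 1 3]]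
    & (dd e f 1 1 5 < 0 -> dd e f 1 2 4 < 0 -> dd e f 4 1 2 < 0 ->
         dd e f 1 2 5 = 0)].
Proof.
rewrite /inQ sum_cd5; split.
  move=> [monE [monF [sumEF [d_ge0 d125]]]].
  by split=> //; do ?split; do ?[apply: monE | apply: monF | apply: d_ge0].
move=> [[? ? ?] [? ? ? ?] ? [? ? ? ? [? ? ?]] ?].
split; first by case=> [|[|[|[|k]]]].
split; first by case=> [|[|[|[|[|k]]]]].
split=> //; split=> // i j k.
by case: i => [|[|[|[|[|i]]]]]; case: j => [|[|[|[|[|[|j]]]]]];
   case: k => [|[|[|[|[|k]]]]].
Qed.

Lemma inQ_inP e f : inQ e f -> inP e.
Proof.
move=> /inQE[[? ? ?] [? ? ? ?]]; rewrite /dd Nsum_cd => ? [? ? ? ? [? ? ?]] _.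
by apply/inPE; do ?split; lra.
Qed.

Definition Qwitness_seq (a b c d : R) : seq R :=
  if d <= 2 * a then [:: d; b + d - a; a + b; a + c; a + c]
  else if (2 * a + c <= b + d) && (a + c <= 2 * b) then
    [:: 2 * a; a + b; a + c; b + d - a; c + d - a]
  else if (3 * b <= c + d) && (2 * b <= a + c) then
    [:: 2 * a; a + b; 2 * b; c + d - b; c + d - a]
  else [:: 2 * a; d; b + d - a; a + c; b + c].

Definition Qwitness e : 'I_5 -> R :=
  fun i => (Qwitness_seq (cd e 1) (cd e 2) (cd e 3) (cd e 4))`_i.

Lemma inP_inQ_witness e : inP e -> inQ e (Qwitness e).
Proof.
move=> /inPE[[? ? ?] ? ? ? ?]; apply/inQE.
rewrite /dd Nsum_cd /Qwitness !cd_nth //= /Qwitness_seq.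
case: ifP => [?|/negbT] /=; first by split; do ?split; lra.
rewrite -ltNge => ?; case: ifP => [/andP[? ?]|/negbT] /=.
  by split; do ?split; lra.
rewrite negb_and -!ltNge => /orP region2; case: ifP => [/andP[? ?]|/negbT] /=.
  by split; do ?split; case: region2; lra.
rewrite negb_and -!ltNge => /orP region3.
by split; do ?split; case: region2 => ?; case: region3 => ?; lra.
Qed.

End Projection.

Theorem lemma6p2 (e : 'I_4 -> int) :
  inP e <-> exists f : 'I_5 -> int, inQ e f.
Proof.
split=> [/inP_inQ_witness ?|[f /inQ_inP]] //.
by exists (Qwitness _ e).
Qed.
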